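(* Let $A(x)=\sum_{i=0}^d a_ix^i\in\mathbb{Z}[x]$ be primitive of degree $d\ge1$ with $a_0\ne0$, and let $m>d$. Then $\Lambda_m$ is a submodule of $\Theta_m$ of index $|a_d|^{m-d}$.
   Context: A vector $(x_1,\dots,x_m)$ is a linear recurrence determined by $A$ if $\sum_{i=0}^d a_ix_{j+i}=0$ for all $1\le j\le m-d$. $\Lambda_m\subseteq\mathbb{Z}^m$ is the $\mathbb{Z}$-module of vectors in $\mathbb{Z}^m$ that are linear recurrences determined by $A$; $\Theta_m\subseteq\mathbb{Z}^d\times\mathbb{Q}^{m-d}$ is the $\mathbb{Z}$-module of vectors in $\mathbb{Q}^m$ that are linear recurrences determined by $A$ and whose first $d$ coordinates are integers. *)

From HB Require Import structures.
From mathcomp Require Import all_boot all_order all_algebra.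
Set Implicit Arguments. Unset Strict Implicit. Unset Printing Implicit Defensive.
Import Order.TTheory GRing.Theory Num.Theory.
Local Open Scope ring_scope.

(* An integer polynomial is primitive if the gcd of its coefficients is 1.
   [zcontents A] is that gcd up to the sign of the leading coefficient. *)
Definition primitive_poly (A : {poly int}) : Prop := `|zcontents A| = 1.

(* k-th coordinate (0-based) of a vector in Q^m; 0 out of range. *)
Definition vc (m : nat) (x : 'rV[rat]_m) (k : nat) : rat :=
  if insub k is Some i then x 0 i else 0.

Definition is_lin_rec (A : {poly int}) (m : nat) (x : 'rV[rat]_m) : Prop :=
  forall j : nat, (j + (size A).-1 < m)%N ->
    \sum_(i < (size A).-1.+1) (A`_i)%:~R * vc x (j + i) = 0.

Definition Lambda (A : {poly int}) (m : nat) (x : 'rV[rat]_m) : Prop :=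
  (forall k : 'I_m, x 0 k \is a Num.int) /\ is_lin_rec A x.

Definition Theta (A : {poly int}) (m : nat) (x : 'rV[rat]_m) : Prop :=
  (forall k : 'I_m, (k < (size A).-1)%N -> x 0 k \is a Num.int) /\ is_lin_rec A x.

Definition has_index (V : zmodType) (H G : V -> Prop) (N : nat) : Prop :=
  exists r : 'I_N -> V,
    (forall i, G (r i)) /\
    (forall x, G x -> exists i, H (x - r i)) /\
    (forall i j, H (r i - r j) -> i = j).

From HB Require Import structures.
From mathcomp Require Import all_boot all_order all_algebra zify ring.
Set Implicit Arguments. Unset Strict Implicit. Unset Printing Implicit Defensive.
Import Order.TTheory GRing.Theory Num.Theory.
Local Open Scope ring_scope.

(* Write d = deg A and a = a_d.  For d <= n <= m we truncate the two modules:
   [Lam n] consists of the vectors that are integral in their first n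
   coordinates and satisfy every recurrence window contained in the first n
   coordinates, and [Th n] is defined likewise with integrality required only
   on the first d coordinates.  Then Lam m = Lambda_m, Th m = Theta_m and
   Lam d = Th d, and [Th n : Lam n] = |a|^(n - d) by induction on n, along
   the tower Lam (n+1) <= Kp n <= Th (n+1) with Kp n = Lam n /\ Th (n+1):
   - [Th (n+1) : Kp n] = [Th n : Lam n], because correcting coordinate n by a
     rational multiple of e_n enforces the new window (index_Kp_Th);
   - [Kp n : Lam (n+1)] = |a|: a x_n is an integer for x in Kp n, and Kp n
     contains some y with y_n = -1/a mod Z, whose multiples represent the |a|
     cosets (index_Lam_Kp).
   The vector y comes from an integral solution of the banded Toeplitz system
   sum_i a_i z_(j+i) = [j = N], which exists because A is primitive: by Gauss's
   lemma the band matrix of A has unit invariant factors in its Smith form. *)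

Section Index.
Variable V : zmodType.
Implicit Types (P H K G : V -> Prop) (u v : V).

Definition subgroup P := P 0 /\ forall u v, P u -> P v -> P (u - v).

Lemma subgroupN P u : subgroup P -> P u -> P (- u).
Proof. by case=> P0 PB Pu; rewrite -sub0r; apply: PB. Qed.

Lemma subgroupD P u v : subgroup P -> P u -> P v -> P (u + v).
Proof. by move=> sP Pu Pv; rewrite -[v]opprK; apply: sP.2 => //; apply: subgroupN. Qed.

Lemma subgroupMn P u j : subgroup P -> P u -> P (u *+ j).
Proof.
move=> sP Pu; elim: j => [|j IH]; first by rewrite mulr0n; case: sP.
by rewrite mulrS; apply: subgroupD.
Qed.

Lemma has_index_ext H G H' G' N :
  (forall x, H x <-> H' x) -> (forall x, G x <-> G' x) ->
  has_index H G N -> has_index H' G' N.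
Proof.
move=> eH eG [r [rG [cov dis]]]; exists r; split; first by move=> i; apply/eG.
split; first by move=> x /eG /cov [i /eH Hi]; exists i.
by move=> i j /eH; apply: dis.
Qed.

(* Indices multiply along a tower H <= K <= G: the sums r_i + s_j of the
   representatives of G/K and K/H represent G/H. *)
Lemma has_index_tower H K G N1 N2 :
  subgroup K -> subgroup G ->
  (forall x, H x -> K x) -> (forall x, K x -> G x) ->
  has_index K G N1 -> has_index H K N2 -> has_index H G (N1 * N2).
Proof.
move=> sK sG HK KG [r [rG [rcov rdis]]] [s [sK' [scov sdis]]].
have E : (N1 * N2 = #|{: 'I_N1 * 'I_N2}|)%N by rewrite card_prod !card_ord.
pose e (p : 'I_(N1 * N2)) : 'I_N1 * 'I_N2 := enum_val (cast_ord E p).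
exists (fun p => r (e p).1 + s (e p).2); split.
  by move=> p; apply: subgroupD => //; apply: KG.
split.
  move=> x /rcov [i Ki]; have [j Hj] := scov _ Ki.
  exists (cast_ord (esym E) (enum_rank (i, j))).
  by rewrite /e cast_ordKV enum_rankK /= opprD addrA.
move=> p q Hpq.
have Kr : K (r (e p).1 - r (e q).1).
  have Kx := HK _ Hpq.
  have Ks : K (s (e p).2 - s (e q).2) by apply: sK.2; apply: sK'.
  have := sK.2 _ _ Kx Ks.
  by rewrite opprD addrACA addrK.
have e1 := rdis _ _ Kr.
have e2 : (e p).2 = (e q).2.
  by apply: sdis; move: Hpq; rewrite e1 opprD addrACA subrr add0r.
have : e p = e q by case: (e p) (e q) e1 e2 => [? ?] [? ?] /= -> ->.
by move/enum_val_inj/cast_ord_inj.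
Qed.
End Index.

Lemma eq_nat_of_dvdz (a : int) (i j : nat) :
  (i < `|a|)%N -> (j < `|a|)%N -> (a %| j%:Z - i%:Z)%Z -> i = j.
Proof.
move=> hi hj; rewrite -eqz_mod_dvd -!(modz_abs _ a) !modz_small ?ltz_nat //.
by move/eqP => [].
Qed.

(* An integer matrix T such that every common divisor of the entries of v T
   divides all entries of v is surjective: all invariant factors of its Smith
   normal form T = L D R are units, so b = T (R^-1 w) for a suitable w. *)
Lemma int_mx_surjective (r s : nat) (T : 'M[int]_(r, r + s)) :
  (forall (v : 'rV[int]_r) (c : int),
     (forall k, (c %| (v *m T) ord0 k)%Z) -> forall i, (c %| v ord0 i)%Z) ->
  forall b : 'cV[int]_r, exists z : 'cV[int]_(r + s), T *m z = b.
Proof.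
move=> primT b.
have [L uL [R uR [dl _ eT]]] := int_Smith_normal_form T.
set D := \matrix_(i, j) _ in eT.
have dl_unit (i : 'I_r) : dl`_i * dl`_i = 1.
  pose v : 'rV[int]_r := delta_mx 0 i *m invmx L.
  have vL : v *m L = delta_mx 0 i by rewrite -mulmxA mulVmx // mulmx1.
  have dv : forall k, (dl`_i %| v ord0 k)%Z.
    apply: primT => k; rewrite eT !mulmxA vL -rowE !mxE.
    apply: rpred_sum => l _; rewrite !mxE mulrnAl; apply: rpredMn.
    exact: dvdz_mulr.
  have : (dl`_i %| (v *m L) ord0 i)%Z.
    by rewrite !mxE; apply: rpred_sum => j _; apply: dvdz_mulr.
  rewrite vL mxE !eqxx dvdz1 => /eqP h1.
  by rewrite -expr2 -real_normK ?num_real // -abszE h1.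
pose u := invmx L *m b.
pose w : 'cV[int]_(r + s) := col_mx (\col_j (dl`_j * u j 0)) 0.
have Dw : D *m w = u.
  apply/matrixP => j k; rewrite !ord1 !mxE big_split_ord /=.
  rewrite [X in _ + X]big1 ?addr0.
    rewrite (bigD1 j) //= big1 ?addr0.
      by rewrite !mxE (unsplitK (inl _)) !mxE /= eqxx mulr1n mulrA dl_unit mul1r.
    move=> l hl; have /negbTE hn : (val l != val j) := hl.
    by rewrite !mxE eq_sym hn mulr0n mul0r.
  move=> l _; rewrite !mxE /=.
  by rewrite eqn_leq [(r + l <= j)%N]leqNgt (leq_trans (ltn_ord j) (leq_addr _ _)) andbF mulr0n mul0r.
exists (invmx R *m w).
by rewrite eT -!mulmxA (mulmxA R) mulmxV // mul1mx Dw mulmxA mulmxV // mul1mx.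
Qed.

(* Gauss's lemma in divisibility form: since contents are multiplicative, a
   common divisor of the coefficients of V * A divides those of V when A is
   primitive. *)
Lemma primitive_dvd_coef (A V : {poly int}) (c : int) : primitive_poly A ->
  (forall k, (c %| (V * A)`_k)%Z) -> forall k, (c %| V`_k)%Z.
Proof.
move=> primA dVA; apply/polyOverP; rewrite -dvdz_contents.
have : (c %| zcontents (V * A))%Z by rewrite dvdz_contents; apply/polyOverP.
have cA2 : zcontents A * zcontents A = 1.
  by rewrite -expr2 -real_normK ?num_real // primA expr1n.
rewrite zcontentsM => dVA'.
by rewrite -[zcontents V]mulr1 -cA2 mulrA; apply: dvdz_mulr.
Qed.

(* The r x M band (Toeplitz) matrix of A: row j holds the coefficients of
   X^j * A, so that v *m band_mx A r M lists the coefficients of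
   (sum_j v_j X^j) * A. *)
Definition band_mx (A : {poly int}) (r M : nat) : 'M[int]_(r, M) :=
  \matrix_(j, k) (if (j <= k)%N then A`_(k - j) else 0).

Lemma band_mx_coef (A : {poly int}) (r : nat) (v : 'rV[int]_r.+1) (k : nat) :
  (\poly_(j < r.+1) v ord0 (inord j) * A)`_k =
  \sum_(j < r.+1) v ord0 j * (if (j <= k)%N then A`_(k - j) else 0).
Proof.
set V := \poly_(j < r.+1) _; rewrite coefM.
have eV (j : 'I_r.+1) : v ord0 j = V`_j by rewrite coef_poly ltn_ord inord_val.
under [RHS]eq_bigr => j _ do rewrite eV.
rewrite (big_ord_widen (k + r.+1).+1 (fun j => V`_j * A`_(k - j))) ?ltnS ?leq_addr //.
rewrite [RHS](big_ord_widen (k + r.+1).+1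
  (fun j => V`_j * (if (j <= k)%N then A`_(k - j) else 0))); last by lia.
rewrite big_mkcond [RHS]big_mkcond /=; apply: eq_bigr => j _.
rewrite !coef_poly ltnS.
by case: (j <= k)%N; case: (j < r.+1)%N; rewrite /= ?mul0r ?mulr0.
Qed.

(* For primitive A, the band matrix with M = r + deg A columns satisfies the
   hypothesis of int_mx_surjective: v *m band_mx A r M is the full coefficient
   list of V * A, and Gauss's lemma applies. *)
Lemma band_mx_primitive (A : {poly int}) (r : nat) : primitive_poly A ->
  forall (v : 'rV[int]_r.+1) (c : int),
  (forall k, (c %| (v *m band_mx A r.+1 (r.+1 + (size A).-1)) ord0 k)%Z) ->
  forall i, (c %| v ord0 i)%Z.
Proof.
move=> primA v c dvT.
pose V := \poly_(j < r.+1) v ord0 (inord j).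
have dVA k : (c %| (V * A)`_k)%Z.
  rewrite band_mx_coef; case: (ltnP k (r.+1 + (size A).-1)) => hk.
    have := dvT (Ordinal hk); rewrite !mxE.
    by congr (_ %| _)%Z; apply: eq_bigr => j _; rewrite !mxE.
  rewrite big1 ?dvdz0 // => j _; case: ifP => hj; last by rewrite mulr0.
  have hjk : (j + size A <= k)%N by move: (ltn_ord j) hk; lia.
  by rewrite nth_default ?mulr0 // leq_subRL.
move=> i; have := primitive_dvd_coef primA dVA i.
by rewrite coef_poly ltn_ord inord_val.
Qed.

Lemma sum_window_shift (R : pzRingType) (c z : nat -> R) (S M j : nat) :
  (forall i, (S <= i)%N -> c i = 0) -> (j + S <= M)%N ->
  \sum_(k < M) (if (j <= k)%N then c (k - j)%N else 0) * z k =
  \sum_(i < S) c i * z (j + i)%N.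
Proof.
move=> c0 hM; have hjM : (j <= M)%N by apply: leq_trans hM; apply: leq_addr.
rewrite -(big_mkord xpredT (fun k => (if (j <= k)%N then c (k - j)%N else 0) * z k)).
rewrite (big_cat_nat (n := j)) //= [X in X + _]big_nat_cond.
rewrite [X in X + _]big1 ?add0r; last first.
  by move=> k /andP[/andP[_ hk] _]; rewrite leqNgt hk mul0r.
rewrite -{1}[j]add0n big_addn (big_cat_nat (n := S)) ?leq_subRL //=.
rewrite [X in _ + X]big_nat_cond [X in _ + X]big1 ?addr0; last first.
  by move=> i /andP[/andP[hi _] _]; rewrite leq_addl addnK c0 ?mul0r.
by rewrite big_mkord; apply: eq_bigr => i _; rewrite leq_addl addnK addnC.
Qed.

Lemma band_system_solution (A : {poly int}) (N : nat) : primitive_poly A ->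
  exists z : nat -> int, forall j, (j <= N)%N ->
    \sum_(i < size A) A`_i * z (j + i)%N = (j == N)%:R.
Proof.
move=> primA; pose M := (N.+1 + (size A).-1)%N.
have [zc Tzc] := int_mx_surjective (band_mx_primitive primA)
  (delta_mx (@ord_max N) ord0).
pose z k := if (k < M)%N then zc (inord k) ord0 else 0.
exists z => j hj.
have hjM : (j + size A <= M)%N by rewrite /M; lia.
have := congr1 (fun X : 'cV[int]_N.+1 => X (inord j) ord0) Tzc; rewrite !mxE.
have -> : (inord j == ord_max :> 'I_N.+1) = (j == N) by rewrite -val_eqE /= inordK.
rewrite eqxx andbT => <-.
rewrite -(@sum_window_shift _ (fun i => A`_i) z (size A) M j _ hjM); last first.
  by move=> i hi; rewrite nth_default.
by apply: eq_bigr => k _; rewrite /z ltn_ord inord_val mxE inordK.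
Qed.

Section Coordinates.
Variable m : nat.
Implicit Types x y : 'rV[rat]_m.

Lemma vcD x y k : vc (x + y) k = vc x k + vc y k.
Proof. by rewrite /vc; case: insub => [i|]; rewrite ?mxE ?addr0. Qed.

Lemma vcN x k : vc (- x) k = - vc x k.
Proof. by rewrite /vc; case: insub => [i|]; rewrite ?mxE ?oppr0. Qed.

Lemma vcB x y k : vc (x - y) k = vc x k - vc y k.
Proof. by rewrite vcD vcN. Qed.

Lemma vc0 k : vc (0 : 'rV[rat]_m) k = 0.
Proof. by rewrite /vc; case: insub => [i|]; rewrite ?mxE. Qed.

Lemma vcZ c x k : vc (c *: x) k = c * vc x k.
Proof. by rewrite /vc; case: insub => [i|]; rewrite ?mxE ?mulr0. Qed.

Lemma vcMn x j k : vc (x *+ j) k = vc x k *+ j.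
Proof. by elim: j => [|j IH]; rewrite ?mulr0n ?vc0 // !mulrS vcD IH. Qed.

Lemma vc_row (f : nat -> rat) k :
  vc (\row_(i < m) f i) k = if (k < m)%N then f k else 0.
Proof.
rewrite /vc; case: insubP => [i hk <-|]; first by rewrite mxE ltn_ord.
by move/negbTE => ->.
Qed.

Lemma vc_out x k : (m <= k)%N -> vc x k = 0.
Proof. by rewrite /vc; case: insubP => [i hk _|//]; rewrite leqNgt hk. Qed.

Lemma vc_ord x (k : 'I_m) : vc x k = x ord0 k.
Proof. by rewrite /vc; case: insubP => [i _ /val_inj ->|]; rewrite ?ltn_ord. Qed.

Definition unit_row n : 'rV[rat]_m := \row_(i < m) (i == n :> nat)%:R.

Lemma vc_unit_row n k : (n < m)%N -> vc (unit_row n) k = (k == n)%:R.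
Proof.
move=> hnm; rewrite /unit_row (@vc_row (fun i => (i == n)%:R)); case: ltnP => // hk.
by case: eqP => // e; rewrite e leqNgt hnm in hk.
Qed.
End Coordinates.

Section Truncation.
Variable A : {poly int}.
Hypothesis A_neq0 : A != 0.
Variable m : nat.
Local Notation d := (size A).-1.
Local Notation ad := ((lead_coef A)%:~R : rat).
Implicit Types x y : 'rV[rat]_m.

Definition window x j := \sum_(i < d.+1) (A`_i)%:~R * vc x (j + i)%N.

Definition rec_upto n x := forall j, (j + d < n)%N -> window x j = 0.

Definition Lam n x := (forall k, (k < n)%N -> vc x k \is a Num.int) /\ rec_upto n x.
Definition Th n x := (forall k, (k < d)%N -> vc x k \is a Num.int) /\ rec_upto n x.
Definition Kp n x := Lam n x /\ rec_upto n.+1 x.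

Lemma ad_neq0 : ad != 0.
Proof. by rewrite intr_eq0 lead_coef_eq0. Qed.

Lemma windowD x y j : window (x + y) j = window x j + window y j.
Proof. by rewrite /window -big_split; apply: eq_bigr => i _ /=; rewrite vcD mulrDr. Qed.

Lemma windowB x y j : window (x - y) j = window x j - window y j.
Proof. by rewrite /window -sumrB; apply: eq_bigr => i _; rewrite vcB mulrBr. Qed.

Lemma windowZ c x j : window (c *: x) j = c * window x j.
Proof. by rewrite /window mulr_sumr; apply: eq_bigr => i _ /=; rewrite vcZ mulrCA. Qed.

Lemma window0 j : window 0 j = 0.
Proof. by rewrite /window big1 // => i _; rewrite vc0 mulr0. Qed.

Lemma window_ext x y j : (forall k, (k <= j + d)%N -> vc x k = vc y k) ->
  window x j = window y j.
Proof.
move=> exy; rewrite /window; apply: eq_bigr => i _; rewrite exy //.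
by rewrite leq_add2l -ltnS.
Qed.

Lemma window_unit_row n j : (n < m)%N -> (j + d <= n)%N ->
  window (unit_row m n) j = ((j + d)%N == n)%:R * ad.
Proof.
move=> hnm hjd; rewrite /window big_ord_recr /= big1 ?add0r.
  by rewrite vc_unit_row // mulrC.
move=> i _; rewrite vc_unit_row //; case: eqP => [e|]; last by rewrite mulr0.
by have := ltn_ord i; rewrite -(ltn_add2l j) e ltnNge hjd.
Qed.

Lemma subgroup_rec n : subgroup (rec_upto n).
Proof.
split; first by move=> j _; rewrite window0.
by move=> u v hu hv j hj; rewrite windowB hu ?hv ?subrr.
Qed.

Lemma subgroup_Lam n : subgroup (Lam n).
Proof.
have [r0 rB] := subgroup_rec n.
split; first by split=> // k _; rewrite vc0.
move=> u v [iu ru] [iv rv]; split; last exact: rB.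
by move=> k hk; rewrite vcB rpredB ?iu ?iv.
Qed.

Lemma subgroup_Th n : subgroup (Th n).
Proof.
have [r0 rB] := subgroup_rec n.
split; first by split=> // k _; rewrite vc0.
move=> u v [iu ru] [iv rv]; split; last exact: rB.
by move=> k hk; rewrite vcB rpredB ?iu ?iv.
Qed.

Lemma subgroup_Kp n : subgroup (Kp n).
Proof.
have [l0 lB] := subgroup_Lam n; have [r0 rB] := subgroup_rec n.+1.
by split; [split | move=> u v [? ?] [? ?]; split; [apply: lB | apply: rB]].
Qed.

Lemma Lam_ext n x y : (forall k, (k < n)%N -> vc x k = vc y k) ->
  Lam n x -> Lam n y.
Proof.
move=> exy [ix rx]; split; first by move=> k hk; rewrite -exy ?ix.
move=> j hj; rewrite -(rx j hj); apply: window_ext => k hk; rewrite exy //.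
exact: leq_ltn_trans hj.
Qed.

Lemma rec_uptoS n x : (d <= n)%N ->
  rec_upto n.+1 x <-> rec_upto n x /\ window x (n - d) = 0.
Proof.
move=> hdn; split.
  by move=> h; split; [move=> j hj; apply: h; apply: ltnW | apply: h; rewrite subnK].
move=> [h1 h2] j; rewrite ltnS leq_eqVlt => /orP [/eqP hj|]; last exact: h1.
by have -> : j = (n - d)%N by rewrite -hj addnK.
Qed.

Lemma Lam_Kp n x : Lam n.+1 x -> Kp n x.
Proof.
move=> [ix rx]; split => //; split; last by move=> j hj; apply: rx; apply: ltnW.
by move=> k hk; apply: ix; apply: ltnW.
Qed.

Lemma Kp_Th n x : (d <= n)%N -> Kp n x -> Th n.+1 x.
Proof. by move=> hdn [[ix _] rx]; split => // k hk; apply: ix; apply: leq_trans hdn. Qed.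

Lemma Lam_S n x : Lam n.+1 x <-> Kp n x /\ vc x n \is a Num.int.
Proof.
split=> [Lx | [[[ix _] rx] xn]]; first by split; [apply: Lam_Kp | apply: Lx.1].
split=> // k; rewrite ltnS leq_eqVlt => /orP [/eqP -> //|]; exact: ix.
Qed.

(* [Th (n+1) : Kp n] = [Th n : Lam n]: adding a multiple of the n-th unit
   vector enforces the window ending at n without changing the earlier
   coordinates, so representatives of Th n / Lam n lift. *)
Lemma index_Kp_Th n N : (d <= n)%N -> (n < m)%N ->
  has_index (Lam n) (Th n) N -> has_index (Kp n) (Th n.+1) N.
Proof.
move=> hdn hnm [r [rG [cov dis]]].
pose adj x := x + (- window x (n - d) / ad) *: unit_row m n.
have vc_adj x k : (k < n)%N -> vc (adj x) k = vc x k.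
  by move=> hk; rewrite vcD vcZ vc_unit_row // ltn_eqF // mulr0 addr0.
have window_adj x : window (adj x) (n - d) = 0.
  rewrite windowD windowZ window_unit_row ?subnK // eqxx mul1r.
  by rewrite divfK ?ad_neq0 // addrN.
have Th_adj x : Th n x -> Th n.+1 (adj x).
  move=> [ix rx]; split.
    by move=> k hk; rewrite vc_adj ?ix //; apply: leq_trans hk hdn.
  apply/rec_uptoS => //; split=> [j hj|]; last exact: window_adj.
  rewrite -(rx j hj); apply: window_ext => k hk.
  by apply: vc_adj; apply: leq_ltn_trans hj.
exists (fun i => adj (r i)); split; first by move=> i; apply: Th_adj.
split.
  move=> x [ix /(rec_uptoS _ hdn) [rx rx']].
  have [i hi] := cov x (conj ix rx); exists i; split.
    by apply: Lam_ext hi => k hk; rewrite !vcB vc_adj.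
  apply: (subgroup_rec n.+1).2; first exact/rec_uptoS.
  by case: (Th_adj _ (rG i)).
move=> i j [hL _]; apply: dis; apply: Lam_ext hL => k hk.
by rewrite !vcB !vc_adj.
Qed.

(* For x in Kp n, the window ending at n writes a_d x_n as an integral
   combination of integral coordinates. *)
Lemma Kp_lead_int n x : (d <= n)%N -> Kp n x -> ad * vc x n \is a Num.int.
Proof.
move=> hdn [[ix _] rx]; have [_] := (rec_uptoS x hdn).1 rx.
rewrite /window big_ord_recr /= subnK // => /eqP; rewrite addrC addr_eq0 => /eqP ->.
rewrite rpredN rpred_sum // => i _; rewrite rpredM ?intr_int // ix //.
by have := ltn_ord i; rewrite -(ltn_add2l (n - d)) subnK.
Qed.

(* Primitivity yields y in Kp n with y_n = -1/a_d modulo Z: take the integral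
   solution z of the band system with its last window at n - d, and subtract
   (1/a_d) e_n to cancel that window. *)
Lemma Kp_fractional n : primitive_poly A -> (d <= n)%N -> (n < m)%N ->
  exists2 y, Kp n y & exists t : int, vc y n = t%:~R - ad^-1.
Proof.
move=> primA hdn hnm.
have [z hz] := band_system_solution (n - d) primA.
pose zr : 'rV[rat]_m := \row_(i < m) (z i)%:~R.
have vc_zr k : (k < m)%N -> vc zr k = (z k)%:~R.
  by move=> hk; rewrite (@vc_row m (fun i => (z i)%:~R)) hk.
have window_zr j : (j + d <= n)%N -> window zr j = (j == (n - d)%N)%:R.
  move=> hj; have hj' : (j <= n - d)%N by rewrite leq_subRL // addnC.
  have /(congr1 (fun t : int => t%:~R : rat)) := hz j hj'.
  rewrite /window -(polySpred A_neq0) rmorph_sum rmorph_nat => <-.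
  apply: eq_bigr => i _; rewrite rmorphM vc_zr //.
  by have := ltn_ord i; lia.
pose y := zr - ad^-1 *: unit_row m n.
have window_y j : (j + d <= n)%N -> window y j = 0.
  move=> hj; rewrite windowB windowZ window_unit_row // window_zr //.
  have -> : ((j + d)%N == n) = (j == (n - d)%N).
    by apply/eqP/eqP => [<-|->]; rewrite ?addnK ?subnK.
  by case: eqP => _; rewrite ?mul0r ?mulr0 ?subr0 // !mul1r mulVf ?ad_neq0 ?subrr.
have vc_y k : (k < m)%N -> vc y k = (z k)%:~R - ad^-1 * (k == n)%:R.
  by move=> hk; rewrite vcB vcZ vc_unit_row // vc_zr.
exists y; last by exists (z n); rewrite vc_y // eqxx mulr1.
split; [split|] => [k hk | j hj | j hj]; last exact: window_y.
- by rewrite vc_y ?(ltn_trans hk hnm) // ltn_eqF // mulr0 subr0 intr_int.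
- by apply: window_y; apply: ltnW.
Qed.

(* [Kp n : Lam (n+1)] = |a_d|: with y as in Kp_fractional, x - (-j y) is
   integral at n exactly when j = a_d x_n mod a_d, so the vectors -j y with
   0 <= j < |a_d| represent the cosets. *)
Lemma index_Lam_Kp n : primitive_poly A -> (d <= n)%N -> (n < m)%N ->
  has_index (Lam n.+1) (Kp n) `|lead_coef A|%N.
Proof.
move=> primA hdn hnm.
have [y Ky [t yn]] := Kp_fractional primA hdn hnm.
set a := lead_coef A; have a_neq0 : a != 0 by rewrite lead_coef_eq0.
have vc_yMn (j : nat) : vc (y *+ j) n = (t *+ j)%:~R - j%:R / ad.
  by rewrite vcMn yn mulrnBl rmorphMn mulr_natl.
exists (fun j : 'I_`|a|%N => - (y *+ j)); split.
  by move=> j; apply: (subgroupN (subgroup_Kp n)); apply: subgroupMn (subgroup_Kp n) _.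
split=> [x Kx | i j].
  have [T aT] := intrP (Kp_lead_int hdn Kx).
  have r_ge0 : 0 <= (T %% a)%Z := modz_ge0 _ a_neq0.
  have r_lt : (`|(T %% a)%Z|%N < `|a|%N)%N.
    by rewrite -ltz_nat gez0_abs // abszE ltz_mod.
  exists (Ordinal r_lt); rewrite opprK; apply/Lam_S; split.
    by apply: (subgroupD (subgroup_Kp n) Kx); apply: subgroupMn (subgroup_Kp n) _.
  have xn : vc x n = ((T %/ a)%Z * a + `|(T %% a)%Z|%N)%:~R / ad.
    by rewrite gez0_abs // -divz_eq -aT mulrC mulKf ?ad_neq0.
  rewrite vcD vc_yMn /= xn intrD mulrDl intrM mulfK ?ad_neq0 //.
  by rewrite addrACA subrr addr0 rpredD ?intr_int.
move=> /Lam_S [_]; rewrite vcB !vcN opprK addrC !vc_yMn => ij_int.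
have : (j%:R - i%:R) / ad \is a Num.int.
  suff -> : (j%:R - i%:R) / ad = (t *+ j - t *+ i)%:~R -
      ((t *+ j)%:~R - j%:R / ad - ((t *+ i)%:~R - i%:R / ad)).
    by rewrite rpredB ?intr_int.
  by rewrite intrB; ring.
case/intrP => q hq; apply/val_inj/(eq_nat_of_dvdz (ltn_ord i) (ltn_ord j)).
apply/dvdzP; exists q; apply: (@intr_inj rat).
by rewrite intrM -hq intrB divfK ?ad_neq0.
Qed.

Lemma index_Lam_Th k : primitive_poly A -> (d + k <= m)%N ->
  has_index (Lam (d + k)) (Th (d + k)) (`|lead_coef A| ^ k)%N.
Proof.
move=> primA; elim: k => [|k IH] hk.
  rewrite addn0; exists (fun=> 0); split; first by move=> _; exact: (subgroup_Th d).1.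
  split; first by move=> x [ix rx]; exists ord0; rewrite subr0; split.
  by move=> i j _; rewrite !ord1.
have hn : (d + k < m)%N by rewrite addnS in hk.
have hdn : (d <= d + k)%N := leq_addr k d.
rewrite addnS expnSr.
apply: (@has_index_tower _ _ (Kp (d + k))).
- exact: subgroup_Kp.
- exact: subgroup_Th.
- by move=> x /Lam_Kp.
- by move=> x; apply: Kp_Th.
- by apply: index_Kp_Th => //; apply: IH; apply: ltnW.
- exact: index_Lam_Kp.
Qed.

Lemma Lam_Lambda x : Lam m x <-> Lambda A x.
Proof.
split=> [[ix rx] | [ix rx]]; split=> //.
- by move=> k; rewrite -vc_ord; apply: ix.
- by move=> k hk; rewrite -[k]/(nat_of_ord (Ordinal hk)) vc_ord; apply: ix.
Qed.

Lemma Th_Theta x : Th m x <-> Theta A x.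
Proof.
split=> [[ix rx] | [ix rx]]; split=> // k hk; first by rewrite -vc_ord; apply: ix.
case: (ltnP k m) => [km | /vc_out ->]; last exact: int_num0.
by rewrite -[k]/(nat_of_ord (Ordinal km)) vc_ord; apply: ix.
Qed.

End Truncation.

Unset Implicit Arguments.

(* The main result. *)
Theorem corollary1 (A : {poly int}) (m : nat) :
  primitive_poly A ->
  (1 <= (size A).-1)%N ->
  A`_0 != 0 ->
  ((size A).-1 < m)%N ->
  (forall x : 'rV[rat]_m, Lambda A x -> Theta A x) /\
  has_index (Lambda A (m:=m)) (Theta A (m:=m))
            (`|lead_coef A| ^ (m - (size A).-1))%N.
Proof.
move=> primA d_ge1 _ d_lt_m.
have A_neq0 : A != 0 by apply: contraTneq d_ge1 => ->; rewrite size_poly0.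
split=> [x [ix rx] | ]; first by split=> // k _; apply: ix.
have := index_Lam_Th A_neq0 (m := m) (k := m - (size A).-1) primA.
rewrite subnKC ?(ltnW d_lt_m) // => /(_ (leqnn m)).
by apply: has_index_ext => x; [exact: Lam_Lambda | exact: Th_Theta].
Qed.
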